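(* In the public goods model with $k\ge n$, for any $\alpha\in(0,1]$, any allocation that satisfies $\alpha$-Prop satisfies $\frac{\alpha}{n}$-RRS. This is tight: there is an instance with $n=2$ agents and an allocation satisfying Prop ($\alpha=1$) under which some agent $i$ receives exactly $\frac1n\mathrm{RRS}_i>0$.
   Context: Public goods model: agents $[n]$, goods $G=[m]$, integer $0\le k\le m$, nonnegative integer additive values $v_{ij}$, $v_i(S)=\sum_{j\in S}v_{ij}$; an allocation is $x\subseteq G$ with $|x|\le k$. $\mathrm{Prop}_i=\frac1n\max_{|y|\le k}v_i(y)$, $\mathrm{RRS}_i=\max_{|y|\le\lfloor k/n\rfloor}v_i(y)$. $x$ is $\beta$-Prop if $v_i(x)\ge\beta\,\mathrm{Prop}_i$ for all $i$, and $\beta$-RRS if $v_i(x)\ge\beta\,\mathrm{RRS}_i$ for all $i$. *)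

From mathcomp Require Import all_boot all_order all_algebra.
Set Implicit Arguments. Unset Strict Implicit. Unset Printing Implicit Defensive.
Import Order.TTheory GRing.Theory Num.Theory.

Definition util (n m : nat) (v : 'I_n -> 'I_m -> nat) (i : 'I_n) (S : {set 'I_m}) : nat :=
  \sum_(j in S) v i j.

Definition feasible (m k : nat) (x : {set 'I_m}) : bool := #|x| <= k.

Definition maxval (n m : nat) (v : 'I_n -> 'I_m -> nat) (i : 'I_n) (b : nat) : nat :=
  \max_(y : {set 'I_m} | #|y| <= b) util v i y.

Local Open Scope ring_scope.

Definition Prop_share (n m k : nat) (v : 'I_n -> 'I_m -> nat) (i : 'I_n) : rat :=
  (maxval v i k)%:R / n%:R.

Definition RRS (n m k : nat) (v : 'I_n -> 'I_m -> nat) (i : 'I_n) : rat :=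
  (maxval v i (k %/ n)%N)%:R.

Definition beta_Prop (n m k : nat) (v : 'I_n -> 'I_m -> nat) (beta : rat)
  (x : {set 'I_m}) : Prop :=
  forall i : 'I_n, (util v i x)%:R >= beta * Prop_share k v i.

Definition beta_RRS (n m k : nat) (v : 'I_n -> 'I_m -> nat) (beta : rat)
  (x : {set 'I_m}) : Prop :=
  forall i : 'I_n, (util v i x)%:R >= beta * RRS k v i.

(* An RRS bundle of [k %/ n] goods is also a bundle of at most [k] goods, so
   [RRS_i <= max_{|y| <= k} v_i(y) = n * Prop_i]; dividing by [n] turns
   [alpha]-Prop into [alpha/n]-RRS for every [alpha >= 0].  For tightness,
   take two agents valuing each of two goods at 1 and [k = 4]: then
   [Prop_i = 1] and [RRS_i = 2], and the allocation [{0}] gives each agent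
   exactly [1 = Prop_i = RRS_i / 2]. *)
From mathcomp Require Import all_boot all_order all_algebra.
Import Order.TTheory GRing.Theory Num.Theory.
Local Open Scope ring_scope.

Section Valuations.

Variables (n m : nat) (v : 'I_n -> 'I_m -> nat) (i : 'I_n).

Lemma util_subset (A B : {set 'I_m}) :
  A \subset B -> (util v i A <= util v i B)%N.
Proof.
by move=> AB; rewrite /util [X in (_ <= X)%N](big_setID A) (setIidPr AB) leq_addr.
Qed.

Lemma maxval_homo : {homo maxval v i : a b / (a <= b)%N}.
Proof.
move=> a b ab; apply/bigmax_leqP => y ya.
by apply: leq_bigmax_cond; apply: leq_trans ya ab.
Qed.

Lemma maxval_full (b : nat) : (m <= b)%N -> maxval v i b = util v i [set: 'I_m].
Proof.
move=> mb; apply/eqP; rewrite eqn_leq; apply/andP; split.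
  by apply/bigmax_leqP => y _; apply/util_subset/subsetT.
by apply: leq_bigmax_cond; rewrite cardsT card_ord.
Qed.

Lemma RRS_le_Prop_share (k : nat) :
  (0 < n)%N -> RRS k v i <= n%:R * Prop_share k v i.
Proof.
move=> n_gt0; rewrite /RRS /Prop_share mulrC divfK ?pnatr_eq0 -?lt0n //.
by rewrite ler_nat maxval_homo // leq_div.
Qed.

End Valuations.

Lemma beta_Prop_RRS (n m k : nat) (v : 'I_n -> 'I_m -> nat) (beta : rat)
    (x : {set 'I_m}) :
  (0 < n)%N -> 0 <= beta -> beta_Prop k v beta x -> beta_RRS k v (beta / n%:R) x.
Proof.
move=> n_gt0 beta_ge0 betaProp i; apply: le_trans (betaProp i).
rewrite -mulrA ler_wpM2l // ler_pdivrMl ?ltr0n //.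
exact: RRS_le_Prop_share.
Qed.

Definition unit_val (n m : nat) : 'I_n -> 'I_m -> nat := fun _ _ => 1%N.

Lemma util_unit_val (n m : nat) (i : 'I_n) (S : {set 'I_m}) :
  util (unit_val n m) i S = #|S|.
Proof. exact: sum1_card. Qed.

Lemma maxval_unit_val (n m : nat) (i : 'I_n) (b : nat) :
  (m <= b)%N -> maxval (unit_val n m) i b = m.
Proof. by move=> mb; rewrite maxval_full // util_unit_val cardsT card_ord. Qed.

Theorem lemma3 :
  (forall (n m k : nat) (v : 'I_n -> 'I_m -> nat) (alpha : rat) (x : {set 'I_m}),
      (0 < n)%N -> (n <= k)%N -> 0 < alpha -> alpha <= 1 ->
      feasible k x -> beta_Prop k v alpha x ->
      beta_RRS k v (alpha / n%:R) x)
  /\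
  (exists (m k : nat) (v : 'I_2 -> 'I_m -> nat) (x : {set 'I_m}),
      [/\ (2 <= k)%N, feasible k x, beta_Prop k v 1 x &
          exists i : 'I_2, 0 < RRS k v i /\ (util v i x)%:R = RRS k v i / 2%:R]).
Proof.
split=> [n m k v alpha x n_gt0 _ alpha_gt0 _ _|].
  exact/beta_Prop_RRS/ltW.
exists 2%N, 4%N, (unit_val 2 2), [set ord0].
have util_x i : util (unit_val 2 2) i [set ord0] = 1%N.
  by rewrite util_unit_val cards1.
split=> //; first by rewrite /feasible cards1.
  by move=> i; rewrite util_x /Prop_share maxval_unit_val // divff.
by exists ord0; rewrite /RRS util_x maxval_unit_val.
Qed.
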